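(* Let $n$ be a positive integer and $N = n^2+n+1$. The equation $a^2+ab+b^2 = N$ has a solution in positive integers $(a,b)$ with $(a,b) \notin \{(n,1),(1,n)\}$ if and only if $N$ has at least two prime factors, counted with multiplicity, congruent to $1 \pmod 3$.
   Context: ''Counted with multiplicity'' means: if $N=\prod p^{e_p}$, the number of such factors is $\sum_{p\equiv 1 \ (\mathrm{mod}\ 3)} e_p$. *)

From mathcomp Require Import all_boot.
Set Implicit Arguments. Unset Strict Implicit. Unset Printing Implicit Defensive.

Definition count_1mod3_factors (N : nat) : nat :=
  \sum_(p <- primes N | p %% 3 == 1) logn p N.

From mathcomp Require Import all_boot all_algebra.
From mathcomp Require Import zify ring.
Set Implicit Arguments. Unset Strict Implicit. Unset Printing Implicit Defensive.
Import GRing.Theory.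

(* Write N = n^2 + n + 1, the value at n of the cyclotomic polynomial Phi_3,
   and Q(a, b) = a^2 + a b + b^2 for the norm form of Z[omega].  Every prime
   factor of N is 3 or 1 mod 3 (n has order 3 modulo it), and 9 does not
   divide N.
   If Q(a, b) = N, then (a - b n)(b - a n) = (a b - n) N, and when 3 | N both
   factors are divisible by 3.  If N has at most one prime factor that is
   1 mod 3, then N = m q with m | 3 and q prime or 1, so N divides one of the
   factors; both are smaller than N in absolute value, so one of them
   vanishes and (a, b) is (n, 1) or (1, n).
   Conversely, if p r | N with p, r = 1 mod 3, Thue's pigeonhole argument
   gives (x, y) <> 0 with |x|, |y| <= n in a lattice of index N on which
   N | Q(x, y); size and parity force Q(x, y) = N, and the lattice is chosen
   so that it misses (n, 1) unless p | 3 and (1, n) unless r | 3. *)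

Lemma prime_mod3_of_cube_root1 p x :
  prime p -> x ^ 3 = 1 %[mod p] -> x != 1 %[mod p] -> p %% 3 = 1.
Proof.
move=> p_pr x3 x_neq1.
have x_pow : x = x ^ (p %% 3) %[mod p].
  rewrite -{1}(fermat_little x p_pr) {1}(divn_eq p 3) expnD (mulnC (p %/ 3)) expnM.
  by rewrite -modnMml -modnXm x3 modnXm exp1n modnMml mul1n.
have := ltn_pmod p (isT : 0 < 3).
case: (p %% 3) x_pow => [|[|[|//]]] // x_pow _; case/negP: x_neq1; apply/eqP.
- by rewrite x_pow.
- by rewrite -x3 expnS -modnMmr -x_pow modnMmr mulnn.
Qed.

Lemma prime_dvd_cyclo3 p n : prime p -> p %| n ^ 2 + n + 1 -> p = 3 \/ p %% 3 = 1.
Proof.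
move=> p_pr pN; case: (eqVneq p 3) => [|p_neq3]; [by left | right].
have n_gt0 : 0 < n.
  by case: n pN => //; rewrite dvdn1 => /eqP p1; rewrite p1 in p_pr.
apply: (prime_mod3_of_cube_root1 (x := n)) => //.
- apply/eqP; rewrite eqn_mod_dvd ?expn_gt0 ?n_gt0 //.
  have -> : n ^ 3 - 1 = (n - 1) * (n ^ 2 + n + 1) by nia.
  exact: dvdn_mull.
- apply: contra p_neq3; rewrite eqn_mod_dvd // => pn1.
  have : p %| 3.
    have -> : 3 = n ^ 2 + n + 1 - (n - 1) * (n + 2) by nia.
    by rewrite dvdn_sub ?dvdn_mulr.
  by rewrite dvdn_prime2.
Qed.

Lemma eq1_or_prime_of_biprime_free q : 0 < q ->
  (forall p r, prime p -> prime r -> ~~ (p * r %| q)) -> q = 1 \/ prime q.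
Proof.
move=> q_gt0 free; case: (ltngtP q 1) => [|q_gt1|]; [by rewrite ltnNge q_gt0 | right | by left].
apply/negPn/primePn => -[|[d /andP [d_gt1 d_ltq] dq]]; first by rewrite ltnNge q_gt1.
have qd_gt1 : 1 < q %/ d by rewrite ltn_divRL ?(ltnW d_gt1) // mul1n.
case/negP: (free _ _ (pdiv_prime d_gt1) (pdiv_prime qd_gt1)).
by apply: dvdn_trans (dvdn_mul (pdiv_dvd d) (pdiv_dvd (q %/ d))) _; rewrite mulnC divnK.
Qed.

Lemma count_1mod3_factors_ge2P N : 0 < N ->
  reflect (exists p r, [/\ prime p, prime r, p %% 3 = 1, r %% 3 = 1 & p * r %| N])
          (2 <= count_1mod3_factors N).
Proof.
move=> N_gt0; rewrite /count_1mod3_factors -big_filter.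
set s := [seq p <- primes N | p %% 3 == 1].
have s_uniq : uniq s by rewrite filter_uniq ?primes_uniq.
have mem_s p : (p \in s) = [&& prime p, p %| N & p %% 3 == 1].
  by rewrite mem_filter mem_primes N_gt0 andbC -andbA.
apply: (iffP idP) => [|[p [r [p_pr r_pr p1 r1 prN]]]].
- case: s s_uniq mem_s => [|p s']; rewrite ?big_nil // big_cons /=.
  move=> /andP [p_notin_s' _] mem_s.
  have /and3P [p_pr pN /eqP p1] : [&& prime p, p %| N & p %% 3 == 1].
    by rewrite -mem_s mem_head.
  case: (leqP 2 (logn p N)) => [p2 _ | p_lt2].
    by exists p, p; split; rewrite // mulnn pfactor_dvdn.
  case: s' p_notin_s' mem_s => [|r s'] p_notin mem_s; first by rewrite big_nil addn0 leqNgt p_lt2.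
  have /and3P [r_pr rN /eqP r1] : [&& prime r, r %| N & r %% 3 == 1].
    by rewrite -mem_s !inE eqxx orbT.
  exists p, r; split=> //; rewrite Gauss_dvd ?pN ?rN // prime_coprime // dvdn_prime2 //.
  by apply: contra p_notin => /eqP ->; rewrite mem_head.
- have pN : p %| N := dvdn_trans (dvdn_mulr r (dvdnn p)) prN.
  have rN : r %| N := dvdn_trans (dvdn_mull p (dvdnn r)) prN.
  have logn_pos t : t \in s -> 0 < logn t N.
    by rewrite logn_gt0 mem_primes N_gt0 mem_s => /and3P [-> -> _].
  have ps : p \in s by rewrite mem_s p_pr pN p1 eqxx.
  rewrite (big_rem p ps) /=; move: prN; case: (eqVneq p r) => [<- ppN | p_neq_r _].
    by apply: leq_trans (leq_addr _ _); rewrite -pfactor_dvdn // -mulnn.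
  have rs : r \in rem p s by rewrite mem_rem_uniq // inE eq_sym p_neq_r mem_s r_pr rN r1 eqxx.
  rewrite (big_rem r rs) /=.
  by have := logn_pos p ps; have := logn_pos r (mem_rem rs); lia.
Qed.

Lemma norm_form_lt n a b : 0 < b -> a ^ 2 + a * b + b ^ 2 = n ^ 2 + n + 1 ->
  a < n ^ 2 + n + 1 /\ a * n < n ^ 2 + n + 1.
Proof. by move=> b_gt0 hQ; split; nia. Qed.

Lemma norm_form_neq_double_odd a b m : odd m -> a ^ 2 + a * b + b ^ 2 != m.*2.
Proof.
move=> m_odd; apply/eqP => hQ.
have := congr1 odd hQ; rewrite odd_double !oddD !oddM /=.
case a_odd: (odd a); case b_odd: (odd b) => //= _.
move: hQ; rewrite -(odd_double_half a) -(odd_double_half b) -(odd_double_half m).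
by rewrite a_odd b_odd m_odd; lia.
Qed.

Lemma norm_form_sub_le n a b : a <= n -> b <= n -> a ^ 2 + b ^ 2 <= n ^ 2 + a * b.
Proof. by move=> a_le b_le; case: (leqP a b) => _; nia. Qed.

Local Open Scope ring_scope.

Lemma dvd3_norm_form (a b : int) : (3 %| a ^+ 2 + a * b + b ^+ 2)%Z -> (3 %| a - b)%Z.
Proof.
have -> : a ^+ 2 + a * b + b ^+ 2 = (a - b) ^+ 2 + 3 * (a * b) by ring.
rewrite rpredDr; last exact: dvdz_mulr (dvdzz 3).
by move=> h; move: (h : (3 %| (a - b) ^+ 2)%Z); rewrite !dvdzE abszX Euclid_dvdX // => /andP [].
Qed.

Lemma dvd3_cyclo3_sub1 (n : nat) : (3 %| n ^ 2 + n + 1)%N -> (3 %| n%:Z - 1)%Z.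
Proof.
move=> N3; apply: dvd3_norm_form.
by rewrite (_ : _ + _ = (n ^ 2 + n + 1)%N%:Z); last by ring.
Qed.

Lemma not_dvd9_cyclo3 (n : nat) : ~~ (9 %| n ^ 2 + n + 1)%N.
Proof.
apply/negP => N9; have /dvdzP [k n_eq] := dvd3_cyclo3_sub1 (dvdn_trans (isT : (3 %| 9)%N) N9).
have : (9 %| (n ^ 2 + n + 1)%N%:Z)%Z := N9.
have -> : (n ^ 2 + n + 1)%N%:Z = (n%:Z - 1) ^+ 2 + 3 * (n%:Z - 1) + 3 by ring.
rewrite n_eq (_ : (k * 3) ^+ 2 + 3 * (k * 3) = (k ^+ 2 + k) * 9); last by ring.
by rewrite rpredDl // dvdz_mull.
Qed.

Local Close Scope ring_scope.

Lemma cyclo3_factorization n :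
  (forall p r, prime p -> prime r -> p %% 3 = 1 -> r %% 3 = 1 -> ~~ (p * r %| n ^ 2 + n + 1)) ->
  exists m q, [/\ n ^ 2 + n + 1 = m * q, m = 1 \/ m = 3, coprime m q & q = 1 \/ prime q].
Proof.
set N := n ^ 2 + n + 1 => free.
have N_gt0 : 0 < N by rewrite /N addn1.
have free_part q : q %| N -> ~~ (3 %| q) -> q = 1 \/ prime q.
  move=> qN q3; apply: eq1_or_prime_of_biprime_free => [|p r p_pr r_pr]; first exact: dvdn_gt0 qN.
  have mod3 s : prime s -> s %| q -> s %% 3 = 1.
    move=> s_pr sq; case: (prime_dvd_cyclo3 s_pr (dvdn_trans sq qN)) => // s3.
    by move: sq q3; rewrite s3 => ->.
  apply/negP => prq; have pq := dvdn_trans (dvdn_mulr r (dvdnn p)) prq.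
  have rq := dvdn_trans (dvdn_mull p (dvdnn r)) prq.
  by case/negP: (free p r p_pr r_pr (mod3 p p_pr pq) (mod3 r r_pr rq)); apply: dvdn_trans qN.
case: (boolP (3 %| N)) => N3.
  have N3_eq : 3 * (N %/ 3) = N by rewrite mulnC divnK.
  have q3 : ~~ (3 %| N %/ 3).
    by apply: contra (not_dvd9_cyclo3 n) => q3; rewrite -/N -N3_eq -[9]/(3 * 3) dvdn_pmul2l.
  exists 3, (N %/ 3); split; [by rewrite N3_eq | by right | by rewrite prime_coprime |].
  by apply: free_part q3; rewrite -{2}N3_eq dvdn_mull.
by exists 1, N; split; [rewrite mul1n | left | exact: coprime1n | exact: free_part].
Qed.

Local Open Scope ring_scope.

Lemma dvdz_mul_split (m q : nat) (X Y : int) : coprime m q -> q = 1%N \/ prime q ->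
  (m %| X)%Z -> (m %| Y)%Z -> ((m * q)%N %| X * Y)%Z -> ((m * q)%N %| X)%Z \/ ((m * q)%N %| Y)%Z.
Proof.
move=> mq [-> | q_pr] mX mY; first by rewrite muln1; left.
rewrite PoszM !Gauss_dvdz // mX mY /= => /andP [_].
by rewrite !dvdzE abszM Euclid_dvdM // => /orP [] ?; [left | right].
Qed.

Lemma eqn_of_dvdz_sub (N a c : nat) : (a < N)%N -> (c < N)%N -> (N %| a%:Z - c%:Z)%Z -> a = c.
Proof. by move=> aN cN; rewrite -eqz_mod_dvd !modz_nat eqz_nat !modn_small // => /eqP. Qed.

Lemma norm_form_trivial_of_dvdz (n a b : nat) : (0 < a)%N -> (0 < b)%N ->
  (a ^ 2 + a * b + b ^ 2 = n ^ 2 + n + 1)%N ->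
  ((n ^ 2 + n + 1)%N %| a%:Z - (b * n)%N%:Z)%Z -> (a, b) = (n, 1%N).
Proof.
move=> a_gt0 b_gt0 hQ.
have [aN _] := norm_form_lt b_gt0 hQ.
have [_ bnN] : (b < n ^ 2 + n + 1 /\ b * n < n ^ 2 + n + 1)%N.
  by apply: norm_form_lt a_gt0 _; rewrite -hQ; ring.
move=> /(eqn_of_dvdz_sub aN bnN) a_eq; rewrite a_eq in hQ *.
have -> : b = 1%N by nia.
by rewrite mul1n.
Qed.

Lemma norm_form_rep_trivial (n a b : nat) : (0 < a)%N -> (0 < b)%N ->
  (a ^ 2 + a * b + b ^ 2 = n ^ 2 + n + 1)%N ->
  (forall p r, prime p -> prime r -> p %% 3 = 1 -> r %% 3 = 1 -> ~~ (p * r %| n ^ 2 + n + 1))%N ->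
  (a, b) = (n, 1%N) \/ (a, b) = (1%N, n).
Proof.
move=> a_gt0 b_gt0 hQ free.
have [m [q [Nmq m13 mq q1p]]] := cyclo3_factorization free.
set X := a%:Z - (b * n)%N%:Z; set Y := b%:Z - (a * n)%N%:Z.
have NXY : ((n ^ 2 + n + 1)%N %| X * Y)%Z.
  have -> : X * Y = (a * b)%N%:Z * (n ^ 2 + n + 1)%N%:Z - n%:Z * (a ^ 2 + a * b + b ^ 2)%N%:Z.
    by rewrite /X /Y; ring.
  by rewrite hQ -mulrBl dvdz_mull.
have [mX mY] : (m %| X)%Z /\ (m %| Y)%Z.
  case: m13 Nmq => -> Nmq; first by rewrite !dvdzE !dvd1n.
  have N3 : (3 %| n ^ 2 + n + 1)%N by rewrite Nmq dvdn_mulr.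
  have ab3 : (3 %| a%:Z - b%:Z)%Z.
    by apply: dvd3_norm_form; rewrite (_ : _ + _ = (n ^ 2 + n + 1)%N%:Z) // -hQ; ring.
  have n3 := dvd3_cyclo3_sub1 N3.
  rewrite (_ : X = (a%:Z - b%:Z) - b%:Z * (n%:Z - 1)); last by rewrite /X; ring.
  rewrite (_ : Y = - (a%:Z - b%:Z) - a%:Z * (n%:Z - 1)); last by rewrite /Y; ring.
  by split; apply: rpredB; rewrite ?rpredN // dvdz_mull.
move: (dvdz_mul_split mq q1p mX mY); rewrite -Nmq => /(_ NXY) [NX | NY].
- by left; apply: norm_form_trivial_of_dvdz.
- have [-> ->] : (b, a) = (n, 1%N).
    by apply: norm_form_trivial_of_dvdz => //; rewrite -hQ; ring.
  by right.
Qed.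

Lemma small_lattice_point (n M p l k : nat) : (0 < M)%N -> (0 < p)%N -> (M * p < n.+1 ^ 2)%N ->
  exists (x : int) (y : nat), [/\ (`|x| <= n)%N, (y <= n)%N, (x != 0) || (y != 0%N),
    (M %| x + l%:Z * y%:Z)%Z & (p %| x + k%:Z * y%:Z)%Z].
Proof.
move=> M_gt0 p_gt0 Mp_lt.
pose f (uv : 'I_n.+1 * 'I_n.+1) : 'I_M * 'I_p :=
  (Ordinal (ltn_pmod (uv.1 + l * uv.2) M_gt0), Ordinal (ltn_pmod (uv.1 + k * uv.2) p_gt0)).
have /injectivePn [[u1 v1] [[u2 v2] neq f_eq]] : ~~ injectiveb f.
  by apply/negP => /injectiveP /leq_card; rewrite !card_prod !card_ord; lia.
wlog v21 : u1 v1 u2 v2 neq f_eq / (v2 <= v1)%N.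
  move=> W; case: (leqP v2 v1) => [v21 | /ltnW v12]; first exact: W neq f_eq v21.
  by apply: (W u2 v2 u1 v1 _ (esym f_eq) v12); rewrite eq_sym.
have dvd_diff d c : ((u1 + c * v1) %% d = (u2 + c * v2) %% d)%N ->
    (d %| (u1%:Z - u2%:Z) + c%:Z * (v1 - v2)%N%:Z)%Z.
  move=> e; rewrite -subzn // (_ : u1%:Z - u2%:Z + c%:Z * (v1%:Z - v2%:Z)
    = (u1 + c * v1)%N%:Z - (u2 + c * v2)%N%:Z); last by ring.
  by rewrite -eqz_mod_dvd !modz_nat e.
exists (u1%:Z - u2%:Z), (v1 - v2)%N; split.
- by have := ltn_ord u1; have := ltn_ord u2; lia.
- by have := ltn_ord v1; lia.
- rewrite -negb_and; apply: contra neq => /andP [/eqP u_eq /eqP v_eq].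
  by rewrite xpair_eqE -!val_eqE /=; apply/andP; split; apply/eqP; lia.
- exact: dvd_diff (congr1 (val \o fst) f_eq).
- exact: dvd_diff (congr1 (val \o snd) f_eq).
Qed.

Lemma norm_form_eq_of_small_multiple (n : nat) (x : int) (y : nat) :
  (`|x| <= n)%N -> (y <= n)%N -> (x != 0) || (y != 0%N) ->
  ((n ^ 2 + n + 1)%N %| x ^+ 2 + x * y%:Z + y%:Z ^+ 2)%Z ->
  exists2 a : nat, x = a%:Z &
    [/\ (0 < a)%N, (0 < y)%N & (a ^ 2 + a * y + y ^ 2 = n ^ 2 + n + 1)%N].
Proof.
move=> x_le y_le nz /dvdzP [k Qk].
have N_odd : odd (n ^ 2 + n + 1) by rewrite addn1 /= oddD oddX; case: (odd n).
case: x x_le nz Qk => a a_le nz Qk; last first.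
  (* x < 0 <= y: then the form is at most n^2 < N, yet a positive multiple of N *)
  have := norm_form_sub_le a_le y_le; rewrite NegzE in Qk => sub_le.
  have Q_le : k * (n ^ 2 + n + 1)%N%:Z <= (n ^ 2)%N%:Z by rewrite -Qk; nia.
  have k_gt0 : 0 < k by nia.
  by nia.
have Qk_nat : (a ^ 2 + a * y + y ^ 2)%N%:Z = k * (n ^ 2 + n + 1)%N%:Z by rewrite -Qk; ring.
have k_gt0 : 0 < k by nia.
have k_le2 : k <= 2 by nia.
have k1 : k = 1.
  suff : k != 2 by lia.
  apply: contraTneq (norm_form_neq_double_odd a y N_odd) => k2.
  by apply/negPn/eqP; move: Qk_nat; rewrite k2; lia.
have hQ : (a ^ 2 + a * y + y ^ 2 = n ^ 2 + n + 1)%N by move: Qk_nat; rewrite k1; lia.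
by exists a => //; split=> //; nia.
Qed.

Lemma norm_form_rep_of_prime_pair (n p r : nat) : (0 < n)%N -> prime p -> prime r ->
  p != 3%N -> r != 3%N -> (p * r %| n ^ 2 + n + 1)%N ->
  exists a b : nat, [/\ (0 < a)%N, (0 < b)%N, (a ^ 2 + a * b + b ^ 2 = n ^ 2 + n + 1)%N
    & ~ ((a, b) = (n, 1%N) \/ (a, b) = (1%N, n))].
Proof.
move=> n_gt0 p_pr r_pr p_neq3 r_neq3 prN.
set N := (n ^ 2 + n + 1)%N in prN *.
have pN : (p %| N)%N := dvdn_trans (dvdn_mulr r (dvdnn p)) prN.
have rN : (r %| N)%N := dvdn_trans (dvdn_mull p (dvdnn r)) prN.
set M := (N %/ p)%N.
have MpN : (M * p = N)%N by rewrite divnK.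
have rM : (r %| M)%N by rewrite -(dvdn_pmul2r (prime_gt0 p_pr)) MpN mulnC.
have M_gt0 : (0 < M)%N by rewrite divn_gt0 ?prime_gt0 // dvdn_leq // /N addn1.
have Mp_lt : (M * p < n.+1 ^ 2)%N by rewrite MpN /N; move: n_gt0; clear; nia.
(* Modulo N, -(n^2 + 1) = n and -(n + 1) = n^2 are the two roots of X^2 + X + 1;
   the lattice uses the first one modulo M and the second one modulo p. *)
have [x [y [x_le y_le nz Mx py]]] :=
  small_lattice_point (n ^ 2 + 1) (n + 1) M_gt0 (prime_gt0 p_pr) Mp_lt.
have NQ : (N %| x ^+ 2 + x * y%:Z + y%:Z ^+ 2)%Z.
  have -> : x ^+ 2 + x * y%:Z + y%:Z ^+ 2
      = (x + (n ^ 2 + 1)%N%:Z * y%:Z) * (x + (n + 1)%N%:Z * y%:Z)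
        - N%:Z * (x * y%:Z + n%:Z * y%:Z ^+ 2) by rewrite /N; ring.
  by apply: rpredB; [rewrite -MpN PoszM; apply: dvdz_mul | apply: dvdz_mulr].
have [a x_eq [a_gt0 y_gt0 hQ]] := norm_form_eq_of_small_multiple x_le y_le nz NQ.
subst x.
have not_dvd3 s : prime s -> s != 3%N -> (s %| 3%:Z)%Z -> False.
  by move=> s_pr s_neq3; rewrite dvdzE /= dvdn_prime2 // (negbTE s_neq3).
exists a, y; split=> // -[[a_eq y_eq] | [a_eq y_eq]]; subst a y.
- apply: (not_dvd3 p p_pr p_neq3).
  have -> : 3%:Z = 4 * N%:Z - (n%:Z + (n + 1)%N%:Z * 1%N%:Z) ^+ 2 by rewrite /N; ring.
  by apply: rpredB; [apply: dvdz_mull | apply: dvdz_exp].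
- apply: (not_dvd3 r r_pr r_neq3); have rx := dvdz_trans (rM : (r %| M%:Z)%Z) Mx.
  have -> : 3%:Z = (1 + (1 - n%:Z) ^+ 2) * N%:Z
                   + (1 - n%:Z) * (1%N%:Z + (n ^ 2 + 1)%N%:Z * n%:Z) by rewrite /N; ring.
  by apply: rpredD; apply: dvdz_mull.
Qed.

Local Close Scope ring_scope.

Theorem theorem3 (n : nat) : 0 < n ->
  (exists a b : nat,
      [/\ 0 < a, 0 < b, a ^ 2 + a * b + b ^ 2 = n ^ 2 + n + 1
        & ~ ((a, b) = (n, 1) \/ (a, b) = (1, n))])
  <-> 2 <= count_1mod3_factors (n ^ 2 + n + 1).
Proof.
move=> n_gt0; have N_gt0 : 0 < n ^ 2 + n + 1 by rewrite addn1.
split=> [[a [b [a_gt0 b_gt0 hQ nontrivial]]] |].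
- case: (count_1mod3_factors_ge2P N_gt0) => // no_pair.
  case: nontrivial; apply: norm_form_rep_trivial => // p r p_pr r_pr p1 r1.
  by apply/negP => prN; apply: no_pair; exists p, r.
- case/(count_1mod3_factors_ge2P N_gt0) => p [r [p_pr r_pr p1 r1 prN]].
  have neq3 s : s %% 3 = 1 -> s != 3 by move=> s1; apply/eqP => s3; rewrite s3 in s1.
  exact: norm_form_rep_of_prime_pair n_gt0 p_pr r_pr (neq3 p p1) (neq3 r r1) prN.
Qed.
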